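(* Let $d\ge1$ and let $P$ be an essential pattern subgroup of $G(d)$. Then $\mathrm{Hdim}(G_P)=\frac{\log_2|P_{d-1}|}{2^{d-1}}$, where $P_{d-1}$ is the level-$(d-1)$ stabilizer of $P$.
   Context: Let $X=\{0,1\}$, $X^*$ the rooted binary tree of finite words, $G=\mathrm{Aut}(X^* )$, $G(d)$ the automorphism group of the finite tree of words of length $\le d$. Sections $g(wv)=g(w)g_w(v)$; $\pi_k$ restriction to words of length $\le k$; $K(n)=\pi_n(K)$; the level-$k$ stabilizer of a group consists of elements fixing all words of length $k$. A subgroup $P\le G(d)$ is an essential pattern group if for every $p\in P$ and $i\in\{0,1\}$ there is $q\in P$ with $\pi_{d-1}(q)=p_i$; $G_P=\{g\in G:\pi_d(g_w)\in P\ \forall w\in X^*\}$. Hausdorff dimension is taken with respect to the profinite metric; for closed $K\le G$, $\mathrm{Hdim}(K)=\liminf_{n\to\infty}\log_2|K(n)|/\log_2|G(n)|$. *)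

From Stdlib Require Import Reals ClassicalEpsilon.
From HB Require Import structures.
From mathcomp Require Import all_boot all_fingroup.

Set Implicit Arguments.
Unset Strict Implicit.
Unset Printing Implicit Defensive.

(* Words over X = {0,1} are seq bool (false = 0, true = 1). *)

Definition is_tree_aut (g : seq bool -> seq bool) : Prop :=
  bijective g /\
  (forall w, size (g w) = size w) /\
  (forall w v, prefix w v -> prefix (g w) (g v)).

(* section g_w, defined by g(wv) = g(w) g_w(v) *)
Definition sect (g : seq bool -> seq bool) (w : seq bool) : seq bool -> seq bool :=
  fun v => drop (size w) (g (w ++ v)).

Definition agree_upto (k : nat) (f g : seq bool -> seq bool) : Prop :=
  forall v, size v <= k -> f v = g v.

Definition Wd (d : nat) := {n : 'I_d.+1 & n.-tuple bool}.

Definition wv (d : nat) (x : Wd d) : seq bool := tval (tagged x).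

Definition fin_tree_aut (d : nat) (p : {perm Wd d}) : bool :=
  [forall x, size (wv (p x)) == size (wv x)] &&
  [forall x, forall y, prefix (wv x) (wv y) ==> prefix (wv (p x)) (wv (p y))].

Definition Gfin (d : nat) : {set {perm Wd d}} := [set p | fin_tree_aut p].

(* an element of G(d) viewed as a function on words (identity beyond level d) *)
Definition ext (d : nat) (p : {perm Wd d}) : seq bool -> seq bool :=
  fun s => match [pick x : Wd d | wv x == s] with
           | Some x => wv (p x)
           | None => s
           end.

Definition lvl_stab (d k : nat) (P : {set {perm Wd d}}) : {set {perm Wd d}} :=
  [set p in P | [forall x, (size (wv x) == k) ==> (p x == x)]].

Definition essential (d : nat) (P : {group {perm Wd d}}) : Prop :=
  P \subset Gfin d /\
  forall p, p \in P -> forall i : bool,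
    exists2 q, q \in P & agree_upto d.-1 (ext q) (sect (ext p) [:: i]).

Definition GP (d : nat) (P : {set {perm Wd d}}) (g : seq bool -> seq bool) : Prop :=
  is_tree_aut g /\
  forall w, exists2 p, p \in P & agree_upto d (sect g w) (ext p).

Definition pb (A : Prop) : bool :=
  if excluded_middle_informative A then true else false.

Definition proj_set (K : (seq bool -> seq bool) -> Prop) (n : nat)
  : {set {perm Wd n}} :=
  [set p | pb (exists g, K g /\ agree_upto n g (ext p))].

Definition log2 (x : R) : R := Rdiv (ln x) (ln 2).

Definition is_liminf (u : nat -> R) (L : R) : Prop :=
  forall eps : R, Rlt 0 eps ->
    (exists N : nat, forall n : nat, (N <= n)%nat -> Rlt (Rminus L eps) (u n)) /\
    (forall N : nat, exists n : nat, (N <= n)%nat /\ Rlt (u n) (Rplus L eps)).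

Definition Hdim_is (K : (seq bool -> seq bool) -> Prop) (L : R) : Prop :=
  is_liminf (fun n => Rdiv (log2 (INR #|proj_set K n|)) (log2 (INR #|Gfin n|))) L.

From Stdlib Require Import Reals Lra ClassicalEpsilon.
From HB Require Import structures.
From mathcomp Require Import all_boot all_fingroup.
From mathcomp Require Import zify.

Set Implicit Arguments.
Unset Strict Implicit.
Unset Printing Implicit Defensive.

(* An automorphism of the binary tree is determined by its portrait, the map sending each
   vertex to the bit by which it swaps its two subtrees, and g lies in G_P exactly when every
   depth-d window of its portrait is the portrait of an element of P.  A pattern of G_P at
   level d + m is thus chosen by picking p in P at the root and then, at each of the
   2^(m+1) - 2 vertices of levels 1..m, an element of P whose top d - 1 levels are dictated
   by the parent; essentiality makes such an element exist, and the possible choices form a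
   coset of the level-(d-1) stabilizer P_(d-1).  Hence |G_P(d+m)| = |P| |P_(d-1)|^(2^(m+1)-2),
   while |G(n)| = 2^(2^n - 1), and the ratio of logarithms converges to
   log2 |P_(d-1)| / 2^(d-1). *)

(* [pact a] is the tree automorphism with portrait [a]: the vertex [w] swaps its two
   subtrees iff [a w]. *)
Fixpoint pact (a : seq bool -> bool) (v : seq bool) : seq bool :=
  if v is x :: v' then (x (+) a [::]) :: pact (fun w => a (x :: w)) v' else [::].

Fixpoint pact_inv (a : seq bool -> bool) (v : seq bool) : seq bool :=
  if v is y :: v' then
    let x := y (+) a [::] in x :: pact_inv (fun w => a (x :: w)) v'
  else [::].

Definition portrait (f : seq bool -> seq bool) (w : seq bool) : bool :=
  last false (f (rcons w false)).

Lemma size_pact a v : size (pact a v) = size v.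
Proof. by elim: v a => //= x v IH a; rewrite IH. Qed.

Lemma pactK a : cancel (pact a) (pact_inv a).
Proof. by move=> v; elim: v a => //= x v IH a; rewrite addbK IH. Qed.

Lemma pact_invK a : cancel (pact_inv a) (pact a).
Proof. by move=> v; elim: v a => //= x v IH a; rewrite IH addbK. Qed.

Lemma pact_inj a : injective (pact a).
Proof. exact: can_inj (pactK a). Qed.

Lemma pact_cat a w v : pact a (w ++ v) = pact a w ++ pact (fun u => a (w ++ u)) v.
Proof. by elim: w a => //= x w IH a; rewrite IH. Qed.

Lemma pact_rcons a w x : pact a (rcons w x) = rcons (pact a w) (x (+) a w).
Proof. by rewrite -cats1 pact_cat /= cats0 cats1. Qed.

Lemma portrait_pact a : portrait (pact a) =1 a.
Proof. by move=> w; rewrite /portrait pact_rcons last_rcons addFb. Qed.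

Lemma pact_prefix a w v : prefix w v -> prefix (pact a w) (pact a v).
Proof. by move/prefixP=> [t ->]; rewrite pact_cat; apply/prefixP; eexists. Qed.

Lemma pact_tree_aut a : is_tree_aut (pact a).
Proof.
split; first by exists (pact_inv a); [exact: pactK | exact: pact_invK].
by split; [exact: size_pact | exact: pact_prefix].
Qed.

Lemma agree_upto_pact n a b :
  (forall w, size w < n -> a w = b w) <-> agree_upto n (pact a) (pact b).
Proof.
split=> [H v | H w Hw].
  elim: v n a b H => [|x v IH] [|n] a b H //= Hv.
  rewrite (H [::]) // (IH n (fun w => a (x :: w)) (fun w => b (x :: w))) // => w Hw.
  exact: H.
by rewrite -(portrait_pact a) -(portrait_pact b) /portrait H // size_rcons.
Qed.

Lemma sect_pact a w : sect (pact a) w =1 pact (fun u => a (w ++ u)).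
Proof. by move=> v; rewrite /sect pact_cat drop_size_cat // size_pact. Qed.

Lemma rcons_portrait (f : seq bool -> seq bool) w :
  size (f w) = size w ->
  (forall x, size (f (rcons w x)) = (size w).+1) ->
  (forall x, prefix (f w) (f (rcons w x))) ->
  f (rcons w true) <> f (rcons w false) ->
  forall x, f (rcons w x) = rcons (f w) (x (+) portrait f w).
Proof.
move=> Hs Hsx Hp Hne.
have child x : exists b, f (rcons w x) = rcons (f w) b.
  have := Hsx x; move/prefixP: (Hp x) => [[|b [|? ?]] ->]; rewrite size_cat Hs /=; try lia.
  by exists b; rewrite cats1.
case: (child false) => b0 e0; case: (child true) => b1 e1.
have -> : portrait f w = b0 by rewrite /portrait e0 last_rcons.
case; rewrite ?e0 ?e1 ?addFb //; congr rcons.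
by case: b0 b1 e0 e1 => [] [] e0 e1 //; case: Hne; rewrite e0 e1.
Qed.

Lemma eq_pact_upto (f : seq bool -> seq bool) n :
  f [::] = [::] ->
  (forall w x, size w < n -> f (rcons w x) = rcons (f w) (x (+) portrait f w)) ->
  agree_upto n f (pact (portrait f)).
Proof.
move=> f0 fS; elim/last_ind => [|w x IH] //; rewrite size_rcons => Hw.
by rewrite fS // pact_rcons IH // ltnW.
Qed.

Lemma tree_aut_pact g : is_tree_aut g -> g =1 pact (portrait g).
Proof.
move=> [[h gK hK] [Hs Hp]] w; apply: (@eq_pact_upto g (size w)) => //.
  by apply/size0nil; rewrite Hs.
move=> u x _; apply: rcons_portrait => [|?|y|/(congr1 h)]; rewrite ?Hs ?size_rcons //.
  by apply: Hp; apply/prefixP; exists [:: y]; rewrite cats1.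
by rewrite !gK => /eqP; rewrite eqseq_rcons andbF.
Qed.

Lemma wv_size n (x : Wd n) : size (wv x) <= n.
Proof. by case: x => [k t]; rewrite /wv /= size_tuple -ltnS. Qed.

Lemma wv_inj n : injective (@wv n).
Proof.
move=> [k t] [k' t']; rewrite /wv /= => e.
have ek : k = k' by apply: val_inj; rewrite /= -(size_tuple t) -(size_tuple t') e.
by subst k'; have -> : t = t' by apply: val_inj.
Qed.

Definition word_of n (s : seq bool) (H : size s <= n) : Wd n :=
  @Tagged 'I_n.+1 (@Ordinal n.+1 (size s) H) (fun k : 'I_n.+1 => k.-tuple bool)
    (Tuple (eqxx (size s))).

Lemma ext_wv n (p : {perm Wd n}) x : ext p (wv x) = wv (p x).
Proof.
rewrite /ext; case: pickP => [y /eqP/wv_inj -> //|].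
by move=> /(_ x); rewrite eqxx.
Qed.

Lemma ext_word_of n (p : {perm Wd n}) s (H : size s <= n) : ext p s = wv (p (word_of H)).
Proof. by rewrite -ext_wv. Qed.

Lemma ext_inj n (p q : {perm Wd n}) : agree_upto n (ext p) (ext q) -> p = q.
Proof.
by move=> H; apply/permP => x; apply: wv_inj; rewrite -!ext_wv H // wv_size.
Qed.

Definition realizes n (p : {perm Wd n}) a := agree_upto n (ext p) (pact a).

Definition perm_portrait n (p : {perm Wd n}) := portrait (ext p).

Lemma realizes_portrait n (p : {perm Wd n}) :
  p \in Gfin n -> realizes p (perm_portrait p).
Proof.
rewrite inE => /andP [/forallP Hs /forallP Hp].
have ext_size w (Hw : size w <= n) : size (ext p w) = size w.
  by rewrite (ext_word_of p Hw) (eqP (Hs _)).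
apply: eq_pact_upto => [|w x Hw].
  by apply/size0nil; rewrite ext_size.
have Hw' : size w <= n by exact: ltnW.
have Hwx y : size (rcons w y) <= n by rewrite size_rcons.
apply: rcons_portrait => [|y|y|]; rewrite ?ext_size ?size_rcons //.
  rewrite (ext_word_of p Hw') (ext_word_of p (Hwx y)).
  move/forallP: (Hp (word_of Hw')) => /(_ (word_of (Hwx y))) /implyP; apply.
  by apply/prefixP; exists [:: y]; rewrite cats1.
rewrite !(ext_word_of p (Hwx _)) => /wv_inj /perm_inj /(congr1 (@wv n)) /eqP.
by rewrite eqseq_rcons andbF.
Qed.

Lemma pact_word_size n a (x : Wd n) : size (pact a (wv x)) <= n.
Proof. by rewrite size_pact wv_size. Qed.

Lemma pact_word_inj n a : injective (fun x : Wd n => word_of (pact_word_size a x)).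
Proof. by move=> x y /(congr1 (@wv n)) /pact_inj; exact: wv_inj. Qed.

Definition perm_of_pact n a : {perm Wd n} := perm (@pact_word_inj n a).

Lemma realizes_perm_of_pact n a : realizes (perm_of_pact n a) a.
Proof. by move=> w H; rewrite (ext_word_of _ H) permE. Qed.

Lemma perm_of_pact_Gfin n a : perm_of_pact n a \in Gfin n.
Proof.
rewrite inE; apply/andP; split; apply/forallP => x.
  by rewrite permE /= size_pact.
by apply/forallP => y; apply/implyP; rewrite !permE; exact: pact_prefix.
Qed.

(* The values of a portrait on the [2 ^ n - 1] words of length [< n], in preorder. *)
Fixpoint pcode (n : nat) (a : seq bool -> bool) : seq bool :=
  if n is n'.+1 then
    a [::] :: (pcode n' (fun w => a (false :: w)) ++ pcode n' (fun w => a (true :: w)))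
  else [::].

Lemma size_pcode n a : size (pcode n a) = 2 ^ n - 1.
Proof.
elim: n a => [|n IH] a //=; rewrite size_cat !IH expnS.
have := expn_gt0 2 n; lia.
Qed.

Lemma pcode_eq n a b : pcode n a = pcode n b <-> (forall w, size w < n -> a w = b w).
Proof.
elim: n a b => [|n IH] a b /=; first by split => // _ [].
split=> [[e0 /eqP] | H].
  rewrite eqseq_cat ?size_pcode // => /andP [/eqP /IH H0 /eqP /IH H1].
  by case=> [|[] w] //= Hw; [apply: H1 | apply: H0].
by rewrite H //; congr (_ :: _ ++ _); apply/IH => w Hw; exact: H.
Qed.

Lemma pcode_le m n a b : m <= n -> pcode n a = pcode n b -> pcode m a = pcode m b.
Proof. by move=> Hmn /pcode_eq H; apply/pcode_eq => w Hw; apply/H/(leq_trans Hw). Qed.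

Definition graft (h : bool) (a0 a1 : seq bool -> bool) (w : seq bool) : bool :=
  if w is i :: w' then (if i then a1 w' else a0 w') else h.

Lemma pcode_graft n h a0 a1 :
  pcode n.+1 (graft h a0 a1) = h :: (pcode n a0 ++ pcode n a1).
Proof. by []. Qed.

Lemma pcode_surj n y : size y = 2 ^ n - 1 -> exists a, pcode n a = y.
Proof.
elim: n y => [|n IH] [|h y] //=; try by exists (fun _ => false).
- by rewrite expnS; have := expn_gt0 2 n; lia.
- rewrite expnS => Hy.
  have Hk : 2 ^ n - 1 <= size y by have := expn_gt0 2 n; lia.
  have [a0 e0] := IH (take (2 ^ n - 1) y) (size_takel Hk).
  have Hd : size (drop (2 ^ n - 1) y) = 2 ^ n - 1 by rewrite size_drop; lia.
  have [a1 e1] := IH _ Hd.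
  by exists (graft h a0 a1); rewrite /= -/(pcode n a0) -/(pcode n a1) e0 e1 cat_take_drop.
Qed.

Lemma realizes_pcode n (p : {perm Wd n}) a :
  realizes p a -> pcode n (perm_portrait p) = pcode n a.
Proof.
move=> H; apply/pcode_eq => w Hw.
by rewrite -(portrait_pact a) /perm_portrait /portrait H // size_rcons.
Qed.

Lemma realizes_inj n (p q : {perm Wd n}) a b :
  realizes p a -> realizes q b -> pcode n a = pcode n b -> p = q.
Proof.
by move=> Ha Hb /pcode_eq /agree_upto_pact H; apply: ext_inj => w Hw; rewrite Ha // Hb // H.
Qed.

Lemma card_eq_size_image (T : finType) (S : {set T}) (U : eqType) (f : T -> U) (L : seq U) :
  {in S &, injective f} -> uniq L ->
  (forall y, y \in L <-> exists2 x, x \in S & f x = y) -> #|S| = size L.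
Proof.
move=> Hi HL Hm; rewrite cardE -(size_map f); apply/perm_size/uniq_perm => //.
  by rewrite map_inj_in_uniq ?enum_uniq // => x y; rewrite !mem_enum; apply: Hi.
move=> y; apply/mapP/idP => [[x] | /Hm [x Hx <-]]; last by exists x; rewrite ?mem_enum.
by rewrite mem_enum => Hx ->; apply/Hm; exists x.
Qed.

Lemma card_Gfin n : #|Gfin n| = 2 ^ (2 ^ n - 1).
Proof.
rewrite (@card_eq_size_image _ _ _ (fun p => pcode n (perm_portrait p))
           (map val (enum {: (2 ^ n - 1).-tuple bool}))).
- by rewrite size_map -cardE card_tuple card_bool.
- by move=> p q Hp Hq; apply: (realizes_inj (realizes_portrait Hp) (realizes_portrait Hq)).
- by rewrite map_inj_uniq ?enum_uniq //; exact: val_inj.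
move=> y; split=> [/mapP [t _ ->] | [p _ <-]].
  have [a ea] := @pcode_surj n t (size_tuple t).
  exists (perm_of_pact n a); first exact: perm_of_pact_Gfin.
  by rewrite (realizes_pcode (@realizes_perm_of_pact n a)).
apply/mapP; exists (Tuple (introT eqP (size_pcode n (perm_portrait p)))) => //.
by rewrite mem_enum.
Qed.

Lemma pbP (A : Prop) : pb A <-> A.
Proof. by rewrite /pb; case: excluded_middle_informative. Qed.

Definition GP_portrait d (P : {set {perm Wd d}}) (a : seq bool -> bool) :=
  forall w, exists2 p, p \in P & forall u, size u < d -> a (w ++ u) = perm_portrait p u.

Lemma GP_portrait_child d (P : {set {perm Wd d}}) a i :
  GP_portrait P a -> GP_portrait P (fun w => a (i :: w)).
Proof. by move=> H w; case: (H (i :: w)) => q Hq Hu; exists q. Qed.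

Lemma GP_portrait_root d (P : {set {perm Wd d}}) a : GP_portrait P a ->
  exists2 q, q \in P & pcode d a = pcode d (perm_portrait q).
Proof. by move=> H; case: (H [::]) => q Hq Hu; exists q => //; apply/pcode_eq. Qed.

Lemma mem_proj_GP d (P : {set {perm Wd d}}) n (p : {perm Wd n}) : P \subset Gfin d ->
  p \in proj_set (GP P) n <-> exists2 a, GP_portrait P a & realizes p a.
Proof.
move=> /subsetP PG; have Preal q (Hq : q \in P) := realizes_portrait (PG q Hq).
rewrite inE; split=> [/pbP [g [[Hg gP] gp]] | [a Ha pa]].
  exists (portrait g); last by move=> w Hw; rewrite -gp // -tree_aut_pact.
  move=> w; have [q Hq Hsq] := gP w; exists q => //; apply/agree_upto_pact => v Hv.
  by rewrite -sect_pact -Preal // -Hsq // /sect !(tree_aut_pact Hg).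
apply/pbP; exists (pact a); split=> [|v Hv]; last by rewrite pa.
split=> [|w]; first exact: pact_tree_aut.
have [q Hq Hu] := Ha w; exists q => // v Hv.
by rewrite sect_pact Preal //; move: v Hv; apply/agree_upto_pact.
Qed.

Lemma card_proj_GP d (P : {set {perm Wd d}}) n (L : seq (seq bool)) :
  P \subset Gfin d -> uniq L ->
  (forall y, y \in L <-> exists2 a, GP_portrait P a & y = pcode n a) ->
  #|proj_set (GP P) n| = size L.
Proof.
move=> PG HL HLc.
apply: (@card_eq_size_image _ _ _ (fun p => pcode n (perm_portrait p))) => //.
  move=> p q /(mem_proj_GP _ PG) [a _ Ha] /(mem_proj_GP _ PG) [b _ Hb].
  by rewrite (realizes_pcode Ha) (realizes_pcode Hb); exact: realizes_inj.
move=> y; split=> [/HLc [a Ha ->] | [p /(mem_proj_GP _ PG) [a Ha Hr] <-]].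
  exists (perm_of_pact n a); last exact: realizes_pcode (@realizes_perm_of_pact n a).
  by apply/(mem_proj_GP _ PG); exists a => //; exact: realizes_perm_of_pact.
by apply/HLc; exists a => //; exact: realizes_pcode.
Qed.

Lemma count_enum (T : finType) (A : {set T}) (a : pred T) :
  count a (enum A) = #|[set x in A | a x]|.
Proof.
rewrite -size_filter cardE; apply/perm_size/uniq_perm.
- exact/filter_uniq/enum_uniq.
- exact: enum_uniq.
by move=> x; rewrite mem_filter !mem_enum inE andbC.
Qed.

Lemma flatten_map_uniq (T S : eqType) (F : T -> seq S) s :
  uniq s -> {in s, forall x, uniq (F x)} ->
  (forall x y z, x \in s -> y \in s -> z \in F x -> z \in F y -> x = y) ->
  uniq (flatten (map F s)).
Proof.
elim: s => [|x s IH] //= /andP [xs Us] UF HD.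
rewrite cat_uniq UF ?mem_head // IH //=; first last.
- by move=> y z t ys zs; apply: HD; rewrite in_cons ?ys ?zs orbT.
- by move=> y ys; apply: UF; rewrite in_cons ys orbT.
rewrite andbT; apply/hasPn => z /flattenP [t /mapP [y ys ->] zy]; apply/negP => zx.
have exy : x = y by apply: (HD x y z) => //; rewrite in_cons ?eqxx ?ys ?orbT.
by move: xs; rewrite exy ys.
Qed.

Lemma size_flatten_map_const (T : eqType) (S : Type) (F : T -> seq S) s k :
  {in s, forall x, size (F x) = k} -> size (flatten (map F s)) = size s * k.
Proof.
elim: s => [|x s IH] //= H; rewrite size_cat H ?mem_head // IH // => y ys.
by apply: H; rewrite in_cons ys orbT.
Qed.

Lemma agree_level_pcode e (q q0 : {perm Wd e.+1}) : q \in Gfin e.+1 -> q0 \in Gfin e.+1 ->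
  (forall x, size (wv x) = e -> q x = q0 x) <->
  pcode e (perm_portrait q) = pcode e (perm_portrait q0).
Proof.
move=> /realizes_portrait Hq /realizes_portrait Hq0; rewrite pcode_eq.
split=> [H | /agree_upto_pact H x Hx].
  apply/agree_upto_pact => w Hw.
  have Hy : size (w ++ nseq (e - size w) false) <= e.+1 by rewrite size_cat size_nseq; lia.
  have Hy2 : size (wv (word_of Hy)) = e by rewrite /= size_cat size_nseq; lia.
  have := congr1 (@wv _) (H _ Hy2); rewrite -!ext_wv /= Hq // Hq0 // !pact_cat.
  by move/(congr1 (take (size w))); rewrite !take_size_cat ?size_pact.
by apply: wv_inj; rewrite -!ext_wv Hq ?Hq0 ?Hx ?H ?Hx // ltnW.
Qed.

Section EssentialCount.

Variables (e : nat) (P : {group {perm Wd e.+1}}).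
Hypothesis P_ess : essential P.

Let PG : P \subset Gfin e.+1 := P_ess.1.

Let realizesP q : q \in P -> realizes q (perm_portrait q).
Proof. by move=> Hq; apply/realizes_portrait/(subsetP PG). Qed.

(* [q] is a possible pattern at the child [i] of a vertex with pattern [p]. *)
Definition fits (p : {perm Wd e.+1}) (i : bool) (q : {perm Wd e.+1}) : bool :=
  pcode e (perm_portrait q) == pcode e (fun u => perm_portrait p (i :: u)).

(* The patterns with the same top [e] levels as [q0] form the coset [lvl_stab e P * q0]. *)
Lemma count_same_pcode q0 : q0 \in P ->
  count (fun q => pcode e (perm_portrait q) == pcode e (perm_portrait q0)) (enum P) =
  #|lvl_stab e P|.
Proof.
move=> Hq0; rewrite count_enum -(card_rcoset (lvl_stab e P) q0); apply: eq_card => q.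
rewrite mem_rcoset !inE groupMr ?groupV //; case Hq: (q \in P) => //=.
have [to_pcode of_pcode] := agree_level_pcode (subsetP PG _ Hq) (subsetP PG _ Hq0).
apply/eqP/forallP => [/of_pcode H x | H].
  by apply/implyP => /eqP Hx; rewrite permM H // permK.
apply: to_pcode => x Hx; move/implyP: (H x); rewrite Hx eqxx permM => /(_ isT) /eqP Hfix.
by rewrite -{2}Hfix permKV.
Qed.

Lemma essential_fits p i : p \in P -> exists2 q, q \in P & fits p i q.
Proof.
move=> Hp; have [q Hq Ha] := P_ess.2 p Hp i; exists q => //.
apply/eqP/pcode_eq/agree_upto_pact => v Hv.
rewrite -realizesP ?Ha //; last exact: leq_trans Hv _.
by rewrite /sect /= realizesP //= drop0.
Qed.

Lemma count_fits p i : p \in P -> count (fits p i) (enum P) = #|lvl_stab e P|.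
Proof.
move=> Hp; have [q0 Hq0 /eqP Hc] := essential_fits i Hp.
by rewrite -(count_same_pcode Hq0); apply: eq_count => q; rewrite /fits Hc.
Qed.

Definition next_fit (p : {perm Wd e.+1}) (i : bool) : {perm Wd e.+1} :=
  odflt p [pick q in P | fits p i q].

Lemma next_fitP p i : p \in P -> next_fit p i \in P /\ fits p i (next_fit p i).
Proof.
move=> Hp; rewrite /next_fit; case: pickP => [q /andP [] //| H].
by have [q Hq Hf] := essential_fits i Hp; move: (H q); rewrite Hq Hf.
Qed.

Lemma foldl_next_fit_in v q : q \in P -> foldl next_fit q v \in P.
Proof. by elim: v q => //= x v IH q Hq; apply/IH/(next_fitP x Hq).1. Qed.

Lemma portrait_foldl_next_fit v u q : q \in P -> size v + size u < e.+1 ->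
  perm_portrait (foldl next_fit q v) u = perm_portrait q (v ++ u).
Proof.
elim: v u q => //= x v IH u q Hq Hs; have [Hn /eqP /pcode_eq Hc] := next_fitP x Hq.
by rewrite IH ?Hc ?size_cat //; rewrite addSn in Hs; exact: ltnW.
Qed.

(* Essentiality lets every pattern be continued indefinitely down the tree. *)
Lemma GP_portrait_extend p : p \in P ->
  exists2 a, GP_portrait P a & pcode e.+1 a = pcode e.+1 (perm_portrait p).
Proof.
move=> Hp; exists (fun w => perm_portrait (foldl next_fit p w) [::]).
  move=> w; exists (foldl next_fit p w); first exact: foldl_next_fit_in.
  by move=> u Hu; rewrite foldl_cat portrait_foldl_next_fit ?cats0 ?addn0 ?foldl_next_fit_in.
by apply/pcode_eq => u Hu; rewrite portrait_foldl_next_fit ?cats0 ?addn0.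
Qed.

(* [codes m p]: the codes of depth [e.+1 + m] of the portraits in G_P with root pattern [p]. *)
Fixpoint codes (m : nat) (p : {perm Wd e.+1}) : seq (seq bool) :=
  if m is m'.+1 then
    [seq perm_portrait p [::] :: (x ++ y)
      | x <- flatten [seq codes m' q | q <- enum P & fits p false q],
        y <- flatten [seq codes m' q | q <- enum P & fits p true q]]
  else [:: pcode e.+1 (perm_portrait p)].

Definition child_codes m p i := flatten [seq codes m q | q <- enum P & fits p i q].

Lemma codesS m p :
  codes m.+1 p = [seq perm_portrait p [::] :: (x ++ y)
                   | x <- child_codes m p false, y <- child_codes m p true].
Proof. by []. Qed.

Lemma mem_child_codes m p i z :
  z \in child_codes m p i -> exists2 q, (q \in P) && fits p i q & z \in codes m q.
Proof.
move/flattenP => [s /mapP [q Hq ->] Hz]; exists q => //.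
by move: Hq; rewrite mem_filter mem_enum andbC.
Qed.

Lemma mem_codes m p y : p \in P ->
  y \in codes m p <->
  exists a, [/\ GP_portrait P a, pcode e.+1 a = pcode e.+1 (perm_portrait p)
              & y = pcode (e.+1 + m) a].
Proof.
elim: m p y => [|m IH] p y Hp.
  rewrite inE addn0; split=> [/eqP -> | [a [_ -> ->]] //].
  by have [a Ha Hea] := GP_portrait_extend Hp; exists a.
rewrite codesS addnS; split.
  move=> /allpairsP [[x z] [Hx Hz ->]].
  have [q0 /andP [Hq0 /eqP /pcode_eq Hc0] Hx0] := mem_child_codes Hx.
  have [q1 /andP [Hq1 /eqP /pcode_eq Hc1] Hz1] := mem_child_codes Hz.
  have [a0 [Ha0 /pcode_eq He0 ->]] := (IH _ _ Hq0).1 Hx0.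
  have [a1 [Ha1 /pcode_eq He1 ->]] := (IH _ _ Hq1).1 Hz1.
  exists (graft (perm_portrait p [::]) a0 a1); split; last by rewrite pcode_graft.
  - case=> [|[] w].
    + by exists p => // -[|[] u] //= Hu; rewrite ?He0 ?He1 ?Hc0 ?Hc1 // ltnW.
    + by have [q Hq Hu] := Ha1 w; exists q.
    + by have [q Hq Hu] := Ha0 w; exists q.
  - by apply/pcode_eq => -[|[] u] //= Hu; rewrite ?He0 ?He1 ?Hc0 ?Hc1 // ltnW.
move=> [a [Ha /pcode_eq He ->]].
have child i : pcode (e.+1 + m) (fun w => a (i :: w)) \in child_codes m p i.
  have [q Hq /pcode_eq Eq] := GP_portrait_root (GP_portrait_child i Ha).
  apply/flattenP; exists (codes m q); last first.
    apply/(IH _ _ Hq); exists (fun w => a (i :: w)).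
    by split => //; [exact: GP_portrait_child | exact/pcode_eq].
  apply: map_f; rewrite mem_filter mem_enum Hq andbT.
  by apply/eqP/pcode_eq => u Hu; rewrite -Eq ?He // ltnW.
apply/allpairsP; exists (pcode (e.+1 + m) (fun w => a (false :: w)),
                         pcode (e.+1 + m) (fun w => a (true :: w))).
by split; [exact: child | exact: child | rewrite /= He].
Qed.

Lemma codes_disjoint m q q' y :
  q \in P -> q' \in P -> y \in codes m q -> y \in codes m q' -> q = q'.
Proof.
move=> Hq Hq' /(mem_codes _ _ Hq) [a [_ Ha ->]] /(mem_codes _ _ Hq') [b [_ Hb E]].
apply: (realizes_inj (realizesP Hq) (realizesP Hq')).
by rewrite -Ha -Hb; apply: pcode_le E; exact: leq_addr.
Qed.

Lemma size_mem_codes m p y : p \in P -> y \in codes m p -> size y = 2 ^ (e.+1 + m) - 1.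
Proof. by move=> Hp /(mem_codes _ _ Hp) [a [_ _ ->]]; rewrite size_pcode. Qed.

Lemma codes_uniq m p : p \in P -> uniq (codes m p).
Proof.
elim: m p => [|m IH] p Hp //.
have child_uniq i : uniq (child_codes m p i).
  apply: flatten_map_uniq; first exact/filter_uniq/enum_uniq.
    by move=> q; rewrite mem_filter mem_enum => /andP [_ /IH].
  by move=> q q' z; rewrite !mem_filter => /and3P [_ Hq _] /and3P [_ Hq' _]; exact: codes_disjoint.
rewrite codesS; apply: allpairs_uniq => // -[x y] [x' y'].
move=> /allpairsP [[x1 y1] [/= Hx _ [-> ->]]] /allpairsP [[x2 y2] [/= Hx2 _ [-> ->]]] /=.
have [q /andP [Hq _] Hxq] := mem_child_codes Hx.
have [q' /andP [Hq' _] Hxq'] := mem_child_codes Hx2.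
case=> /eqP; rewrite eqseq_cat; last by rewrite (size_mem_codes Hq Hxq) (size_mem_codes Hq' Hxq').
by move=> /andP [/eqP -> /eqP ->].
Qed.

Lemma size_codes m p : p \in P -> size (codes m p) = #|lvl_stab e P| ^ (2 ^ m.+1 - 2).
Proof.
set c := #|lvl_stab e P|; elim: m p => [|m IH] p Hp //.
have size_child i : size (child_codes m p i) = c * c ^ (2 ^ m.+1 - 2).
  rewrite /child_codes (@size_flatten_map_const _ _ _ _ (c ^ (2 ^ m.+1 - 2))).
    by rewrite size_filter count_fits.
  by move=> q; rewrite mem_filter mem_enum => /andP [_ /IH].
rewrite codesS size_allpairs !size_child -!expnS -expnD; congr (_ ^ _).
rewrite (expnS 2 m.+1); have := expn_gt0 2 m; rewrite expnS; lia.
Qed.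

Lemma card_proj_GP_level m :
  #|proj_set (GP P) (e.+1 + m)| = #|P| * #|lvl_stab e P| ^ (2 ^ m.+1 - 2).
Proof.
rewrite (@card_proj_GP _ _ _ (flatten [seq codes m p | p <- enum P]) PG).
- rewrite (@size_flatten_map_const _ _ _ _ (#|lvl_stab e P| ^ (2 ^ m.+1 - 2))) -?cardE //.
  by move=> q; rewrite mem_enum; exact: size_codes.
- apply: flatten_map_uniq; first exact: enum_uniq.
    by move=> q; rewrite mem_enum; exact: codes_uniq.
  by move=> q q' z; rewrite !mem_enum; exact: codes_disjoint.
move=> y; split.
  move=> /flattenP [s /mapP [q Hq ->]]; rewrite mem_enum in Hq.
  by move=> /(mem_codes _ _ Hq) [a [Ha _ ->]]; exists a.
move=> [a Ha ->]; have [q Hq E] := GP_portrait_root Ha.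
apply/flattenP; exists (codes m q); first by apply: map_f; rewrite mem_enum.
by apply/(mem_codes _ _ Hq); exists a.
Qed.

End EssentialCount.

Local Open Scope R_scope.

Lemma INR_expn m n : INR (m ^ n) = INR m ^ n.
Proof. by elim: n => [|n IH] //; rewrite expnS -multE mult_INR IH. Qed.

Lemma log2_expn2 n : log2 (INR (2 ^ n)) = INR n.
Proof.
have ln2_gt0 : 0 < ln 2 by have := ln_lt_2; lra.
rewrite /log2 INR_expn (_ : INR 2 = 2) /=; last lra.
by rewrite ln_pow; [field; lra | lra].
Qed.

Lemma log2_ge0 n : (0 < n)%N -> 0 <= log2 (INR n).
Proof.
move=> n_gt0; apply: Rmult_le_pos; last by apply/Rlt_le/Rinv_0_lt_compat; have := ln_lt_2; lra.
have : 1 <= INR n by apply: (le_INR 1); apply/leP.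
case/Rle_lt_or_eq_dec => [/ln_increasing | <-]; rewrite ?ln_1; lra.
Qed.

Lemma log2_mul_expn a b k : (0 < a)%N -> (0 < b)%N ->
  log2 (INR (a * b ^ k)) = log2 (INR a) + INR k * log2 (INR b).
Proof.
move=> a_gt0 b_gt0.
have Ha : 0 < INR a by apply/lt_0_INR/ltP.
have Hb : 0 < INR b by apply/lt_0_INR/ltP.
rewrite /log2 -multE mult_INR INR_expn ln_mult ?ln_pow //; last exact: pow_lt.
by rewrite /Rdiv; ring.
Qed.

Lemma ratio_cvg (lp lc D : R) (k K : nat -> R) :
  0 <= lp -> 0 <= lc -> 1 <= D ->
  (forall m, K m + 1 = D * (k m + 2)) -> (forall m, INR m + 1 <= K m) ->
  Un_cv (fun m => (lp + k m * lc) / K m) (lc / D).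
Proof.
move=> lp_ge0 lc_ge0 D_ge1 KE K_ge eps eps_gt0.
have [N HN] := INR_unbounded ((lp + 3 * lc) / eps).
exists N => m /leP Hm; rewrite /R_dist.
have HNm : INR N <= INR m by apply/le_INR/leP.
have K_gt0 : 0 < K m by have := K_ge m; have := pos_INR m; lra.
have lcD : 0 <= lc / D <= lc.
  have : 0 < / D <= 1.
    by split; [apply: Rinv_0_lt_compat | rewrite -Rinv_1; apply: Rinv_le_contravar]; lra.
  by rewrite /Rdiv; nra.
have bound : lp + 3 * lc < eps * K m.
  have : (lp + 3 * lc) / eps * eps = lp + 3 * lc by field; lra.
  have : (lp + 3 * lc) / eps < K m by have := K_ge m; lra.
  nra.
have -> : (lp + k m * lc) / K m - lc / D = (lp - 2 * lc + lc / D) / K m.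
  have -> : K m = D * (k m + 2) - 1 by have := KE m; lra.
  by field; split; [lra | have := KE m; lra].
set x := lp - 2 * lc + lc / D.
have xK : x / K m * K m = x by field; lra.
apply: Rabs_def1; apply: (Rmult_lt_reg_r (K m)) => //; rewrite xK /x; lra.
Qed.

Lemma log2_ratio_cvg p c e : (0 < p)%N -> (0 < c)%N ->
  Un_cv (fun m => log2 (INR (p * c ^ (2 ^ m.+1 - 2))) / log2 (INR (2 ^ (2 ^ (e.+1 + m) - 1))))
        (log2 (INR c) / 2 ^ e).
Proof.
move=> p_gt0 c_gt0.
apply: (@Un_cv_ext (fun m => (log2 (INR p) + INR (2 ^ m.+1 - 2) * log2 (INR c)) /
                              INR (2 ^ (e.+1 + m) - 1))).
  by move=> m; rewrite log2_mul_expn ?log2_expn2.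
apply: ratio_cvg => [|||m|m]; try exact: log2_ge0.
- by apply: pow_R1_Rle; lra.
- have le2 : (2 <= 2 ^ m.+1)%N by rewrite expnS; have := expn_gt0 2 m; lia.
  have : (2 ^ (e.+1 + m) - 1 + 1 = 2 ^ e * (2 ^ m.+1 - 2 + 2))%N.
    by rewrite !subnK ?expn_gt0 // addSnnS expnD.
  move/(congr1 INR); rewrite -!plusE -multE plus_INR mult_INR plus_INR INR_expn.
  by rewrite (_ : INR 2 = 2) /=; lra.
- rewrite -S_INR; apply/le_INR/leP.
  have : (2 ^ m.+1 <= 2 ^ (e.+1 + m))%N by apply: leq_pexp2l; lia.
  by have := @ltn_expl 2 m.+1 isT; lia.
Qed.

Lemma is_liminf_Un_cv (u v : nat -> R) k L :
  (forall m, u (k + m)%N = v m) -> Un_cv v L -> is_liminf u L.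
Proof.
move=> uv vL eps eps_gt0; have [N HN] := vL eps eps_gt0.
have close n : (k + N <= n)%N -> L - eps < u n < L + eps.
  move=> Hn; have : (N <= n - k)%coq_nat by apply/leP; lia.
  move/HN; rewrite /R_dist -uv subnKC; last by lia.
  by move/Rabs_def2; lra.
split; first by exists (k + N)%N => n /close [].
move=> M; exists (maxn M (k + N)); split; first exact: leq_maxl.
by case: (close _ (leq_maxr M (k + N))).
Qed.

Close Scope R_scope.

Theorem mainTheorem12 (d : nat) (P : {group {perm Wd d}}) :
  (1 <= d)%nat ->
  essential P ->
  Hdim_is (GP P)
    (Rdiv (log2 (INR #|lvl_stab d.-1 P|)) (pow 2 d.-1)).
Proof.
case: d P => [|e] P // _ P_ess /=.
have stab_gt0 : 0 < #|lvl_stab e P|.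
  apply/card_gt0P; exists 1%g; rewrite inE group1.
  by apply/forallP => x; rewrite perm1 eqxx implybT.
apply: (@is_liminf_Un_cv _ _ e.+1); last exact: log2_ratio_cvg (cardG_gt0 P) stab_gt0.
by move=> m; rewrite card_proj_GP_level // card_Gfin.
Qed.
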